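(* Let $\mathcal{S}$ be a set of Turing degrees and let $\mathbb{R}_{\mathcal{S}}$ be the set of reals whose Turing degree lies in $\mathcal{S}$. Then $\mathbb{R}_{\mathcal{S}}$ is a subfield of $\mathbb{R}$ if and only if $\mathcal{S}$ is a nonempty ideal, i.e. $\mathcal{S}$ is nonempty, closed under finite joins $\oplus$, and closed downward under $\le_T$.
   Context: Turing reducibility between reals is the usual one; $\oplus$ denotes the Turing join. *)

From Stdlib Require Import Reals Arith Cantor List.
Open Scope R_scope.

(* Sets of naturals are predicates nat -> Prop (no decidability assumed). *)

Inductive code : Type :=
| CZero : code
| CSucc : code
| CProj : nat -> code               (* i-th argument (0 if absent) *)
| COrac : code
| CComp : code -> list code -> code
| CPrec : code -> code -> code
| CMu   : code -> code.

Inductive eval (O : nat -> Prop) : code -> list nat -> nat -> Prop :=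
| ev_zero v : eval O CZero v 0
| ev_succ x v : eval O CSucc (x :: v) (S x)
| ev_proj i v : eval O (CProj i) v (nth i v 0%nat)
| ev_orac_in x v : O x -> eval O COrac (x :: v) 1
| ev_orac_out x v : ~ O x -> eval O COrac (x :: v) 0
| ev_comp f gs v ws y :
    evals O gs v ws -> eval O f ws y -> eval O (CComp f gs) v y
| ev_prec0 f g v y : eval O f v y -> eval O (CPrec f g) (0%nat :: v) y
| ev_precS f g n v y z :
    eval O (CPrec f g) (n :: v) y -> eval O g (n :: y :: v) z ->
    eval O (CPrec f g) (S n :: v) z
| ev_mu f v n :
    eval O f (n :: v) 0 ->
    (forall m, (m < n)%nat -> exists k, eval O f (m :: v) (S k)) ->
    eval O (CMu f) v n
with evals (O : nat -> Prop) : list code -> list nat -> list nat -> Prop :=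
| evs_nil v : evals O nil v nil
| evs_cons g gs v w ws : eval O g v w -> evals O gs v ws -> evals O (g :: gs) v (w :: ws).

Definition turing_le (A B : nat -> Prop) : Prop :=
  exists e : code, forall n : nat,
    (A n -> eval B e (n :: nil) 1) /\ (~ A n -> eval B e (n :: nil) 0).

Definition turing_equiv (A B : nat -> Prop) : Prop := turing_le A B /\ turing_le B A.

Definition tjoin (A B : nat -> Prop) : nat -> Prop :=
  fun n => if Nat.even n then A (Nat.div2 n) else B (Nat.div2 n).

(* Fixed computable enumeration of Q: n |-> (a,b) (Cantor), numerator from a via
   the zigzag bijection nat -> Z, denominator b+1. *)
Definition zig (a : nat) : Z :=
  if Nat.even a then Z.of_nat (Nat.div2 a) else (- Z.of_nat (S (Nat.div2 a)))%Z.

Definition rat_of_nat (n : nat) : R :=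
  let (a, b) := Cantor.of_nat n in IZR (zig a) / INR (S b).

Definition cut (x : R) : nat -> Prop := fun n => rat_of_nat n < x.

(* A set of Turing degrees is represented as a predicate on sets of naturals
   that is invariant under Turing equivalence. *)
Definition degree_set (S : (nat -> Prop) -> Prop) : Prop :=
  forall A B, turing_equiv A B -> S A -> S B.

Definition degree_ideal (S : (nat -> Prop) -> Prop) : Prop :=
  (exists A, S A) /\
  (forall A B, S A -> S B -> S (tjoin A B)) /\
  (forall A B, S B -> turing_le A B -> S A).

Definition reals_of (S : (nat -> Prop) -> Prop) : R -> Prop := fun x => S (cut x).

Definition is_subfield (F : R -> Prop) : Prop :=
  F 0 /\ F 1 /\
  (forall x y, F x -> F y -> F (x + y)) /\
  (forall x, F x -> F (- x)) /\
  (forall x y, F x -> F y -> F (x * y)) /\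
  (forall x, F x -> x <> 0 -> F (/ x)).

(* A set D is Turing equivalent to the cut of the real whose base-4 digits are the values
   of its characteristic function: with digits 0 and 1 only, the real stays in the first
   third of each digit interval, away from its midpoint, so every digit can be read off the
   cut, and conversely the cut can be decided from enough digits.

   If S is an ideal, it contains the (computable) cuts of rationals, and for an irrational
   result cut (x + y) <=_T cut x (+) cut y, cut (- x) <=_T cut x and cut (/ x) <=_T cut x;
   products follow from z * z = / (/ z - / (z + 1)) - z and
   x * y = ((x + y)^2 - (x - y)^2) / 4.

   Conversely, if R_S is a subfield, the reals coding A (+) 0 and 0 (+) B add up to the real
   coding A (+) B, which gives closure under joins; and if A <=_T B then B (+) A and B (+) 0
   are both equivalent to B, so their codes lie in R_S, and the difference of these codes
   is the code of 0 (+) A, which is equivalent to A. *)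

From Stdlib Require Import Reals Lia Lra List ClassicalEpsilon Cantor ZArith.
Import ListNotations.

Local Open Scope nat_scope.

(** * Oracle-computable functions *)

Definition member (O : nat -> Prop) (x : nat) : bool :=
  if excluded_middle_informative (O x) then true else false.

Lemma member_true O x : member O x = true <-> O x.
Proof. unfold member; destruct excluded_middle_informative; split; congruence || tauto. Qed.

Lemma member_false O x : member O x = false <-> ~ O x.
Proof. unfold member; destruct excluded_middle_informative; split; congruence || tauto. Qed.

Lemma member_eq O x b : (O x <-> b = true) -> member O x = b.
Proof.
  intro H; destruct b; [apply member_true, H; reflexivity|].
  apply member_false; intro h; apply H in h; discriminate.
Qed.

Fixpoint primrec (F G : list nat -> nat) (n : nat) (w : list nat) : nat :=
  match n with 0 => F w | S k => G (k :: primrec F G k w :: w) end.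

Definition least_zero (F : list nat -> nat) (v : list nat) (n : nat) : Prop :=
  F (n :: v) = 0 /\ forall m, m < n -> F (m :: v) <> 0.

(* An arbitrary value when [F] has no zero at [v]. *)
Definition mu (F : list nat -> nat) (v : list nat) : nat :=
  epsilon (inhabits 0) (least_zero F v).

Lemma mu_spec F v : (exists n, F (n :: v) = 0) -> least_zero F v (mu F v).
Proof.
  intros [n Hn]; unfold mu; apply epsilon_spec.
  induction n as [n IH] using (well_founded_induction lt_wf).
  destruct (classic (exists m, m < n /\ F (m :: v) = 0)) as [[m [Hm Fm]]|Hno].
  - exact (IH m Hm Fm).
  - exists n; split; auto; intros m Hm Fm; apply Hno; eauto.
Qed.

Lemma mu_eq F v n : least_zero F v n -> mu F v = n.
Proof.
  intro Hn; destruct (mu_spec F v) as [Hm Hltm]; [exists n; apply Hn|].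
  destruct Hn as [Hn Hltn].
  destruct (Nat.lt_trichotomy (mu F v) n) as [h|[h|h]]; auto.
  - exfalso; exact (Hltn _ h Hm).
  - exfalso; exact (Hltm _ h Hn).
Qed.

Definition computable (O : nat -> Prop) (f : list nat -> nat) : Prop :=
  exists c, forall v, eval O c v (f v).

Section Computable.

Variable O : nat -> Prop.

Lemma computable_ext f g : computable O f -> (forall v, f v = g v) -> computable O g.
Proof. intros [c H] E; exists c; intro v; rewrite <- E; apply H. Qed.

Lemma computable_zero : computable O (fun _ => 0).
Proof. exists CZero; intro v; constructor. Qed.

Lemma computable_proj i : computable O (fun v => nth i v 0).
Proof. exists (CProj i); intro v; constructor. Qed.

Lemma computable_list Gs : Forall (computable O) Gs ->
  exists cs, forall v, evals O cs v (map (fun G => G v) Gs).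
Proof.
  induction 1 as [|G Gs [c Hc] _ [cs Hcs]].
  - exists nil; intro; constructor.
  - exists (c :: cs); intro v; constructor; auto.
Qed.

Lemma computable_compose F Gs : computable O F -> Forall (computable O) Gs ->
  computable O (fun v => F (map (fun G => G v) Gs)).
Proof.
  intros [c H] HG; destruct (computable_list Gs HG) as [cs Hcs].
  exists (CComp c cs); intro v; econstructor; eauto.
Qed.

Lemma computable_compose1 F G : computable O F -> computable O G ->
  computable O (fun v => F [G v]).
Proof. intros HF HG; apply (computable_compose F [G] HF); auto. Qed.

Lemma computable_compose2 F G1 G2 : computable O F -> computable O G1 -> computable O G2 ->
  computable O (fun v => F [G1 v; G2 v]).
Proof. intros HF H1 H2; apply (computable_compose F [G1; G2] HF); auto. Qed.

Lemma computable_succ f : computable O f -> computable O (fun v => S (f v)).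
Proof.
  intros [c H]; exists (CComp CSucc [c]); intro v.
  econstructor; repeat constructor; apply H.
Qed.

Lemma computable_member f : computable O f -> computable O (fun v => Nat.b2n (member O (f v))).
Proof.
  intros [c H]; exists (CComp COrac [c]); intro v.
  econstructor; [repeat constructor; apply H|].
  destruct (member O (f v)) eqn:E; constructor; [apply member_true | apply member_false]; auto.
Qed.

Lemma computable_rec F G H Ps :
  computable O F -> computable O G -> computable O H -> Forall (computable O) Ps ->
  computable O (fun v => primrec F G (H v) (map (fun P => P v) Ps)).
Proof.
  intros [cf HF] [cg HG] [ch HH] HP; destruct (computable_list Ps HP) as [cs Hcs].
  exists (CComp (CPrec cf cg) (ch :: cs)); intro v; econstructor.
  - constructor; [apply HH | apply Hcs].
  - induction (H v); simpl.
    + constructor; apply HF.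
    + econstructor; [apply IHn | apply HG].
Qed.

Lemma computable_mu F : computable O F -> (forall v, exists n, F (n :: v) = 0) ->
  computable O (mu F).
Proof.
  intros [c H] E; exists (CMu c); intro v.
  destruct (mu_spec F v (E v)) as [H0 Hlt].
  constructor.
  - rewrite <- H0; apply H.
  - intros m Hm; specialize (Hlt m Hm).
    destruct (F (m :: v)) as [|k] eqn:Eq; [congruence|].
    exists k; rewrite <- Eq; apply H.
Qed.

Lemma computable_mu_at F f : computable O F -> (forall v, exists n, F (n :: v) = 0) ->
  computable O f -> computable O (fun v => mu F [f v]).
Proof. intros HF Hterm Hf; apply (computable_compose1 (mu F) f); [apply computable_mu|]; auto. Qed.

Lemma computable_const n : computable O (fun _ => n).
Proof. induction n; [apply computable_zero | apply (computable_succ (fun _ => n)); auto]. Qed.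

Lemma computable_add f g : computable O f -> computable O g -> computable O (fun v => f v + g v).
Proof.
  intros Hf Hg.
  eapply computable_ext.
  - apply (computable_rec (fun w => nth 0 w 0) (fun w => S (nth 1 w 0)) g [f]); auto.
    + apply computable_proj.
    + apply computable_succ, computable_proj.
  - intro v; simpl; induction (g v); simpl; lia.
Qed.

Lemma computable_pred f : computable O f -> computable O (fun v => pred (f v)).
Proof.
  intro Hf; eapply computable_ext.
  - apply (computable_rec (fun _ => 0) (fun w => nth 0 w 0) f []); auto.
    + apply computable_zero.
    + apply computable_proj.
  - intro v; simpl; destruct (f v); reflexivity.
Qed.

Lemma computable_sub f g : computable O f -> computable O g -> computable O (fun v => f v - g v).
Proof.
  intros Hf Hg; eapply computable_ext.
  - apply (computable_rec (fun w => nth 0 w 0) (fun w => pred (nth 1 w 0)) g [f]); auto.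
    + apply computable_proj.
    + apply computable_pred, computable_proj.
  - intro v; simpl; induction (g v); simpl; lia.
Qed.

Lemma computable_mul f g : computable O f -> computable O g -> computable O (fun v => f v * g v).
Proof.
  intros Hf Hg; eapply computable_ext.
  - apply (computable_rec (fun _ => 0) (fun w => nth 1 w 0 + nth 2 w 0) g [f]); auto.
    + apply computable_zero.
    + apply computable_add; apply computable_proj.
  - intro v; simpl; induction (g v); simpl; lia.
Qed.

Lemma computable_if (b : list nat -> bool) f g :
  computable O (fun v => Nat.b2n (b v)) -> computable O f -> computable O g ->
  computable O (fun v => if b v then f v else g v).
Proof.
  intros Hb Hf Hg; eapply computable_ext.
  - apply (computable_rec (fun w => nth 1 w 0) (fun w => nth 2 w 0) (fun v => Nat.b2n (b v))
      [f; g]); auto; apply computable_proj.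
  - intro v; simpl; destruct (b v); reflexivity.
Qed.

Lemma computable_negb (b : list nat -> bool) :
  computable O (fun v => Nat.b2n (b v)) -> computable O (fun v => Nat.b2n (negb (b v))).
Proof.
  intro Hb; eapply computable_ext.
  - apply (computable_sub (fun _ => 1)); [apply computable_const | exact Hb].
  - intro v; simpl; destruct (b v); reflexivity.
Qed.

Lemma computable_andb (b c : list nat -> bool) :
  computable O (fun v => Nat.b2n (b v)) -> computable O (fun v => Nat.b2n (c v)) ->
  computable O (fun v => Nat.b2n (b v && c v)).
Proof.
  intros Hb Hc; eapply computable_ext; [apply (computable_mul _ _ Hb Hc)|].
  intro v; simpl; destruct (b v), (c v); reflexivity.
Qed.

Lemma computable_b2n_if (c b1 b2 : list nat -> bool) :
  computable O (fun v => Nat.b2n (c v)) -> computable O (fun v => Nat.b2n (b1 v)) ->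
  computable O (fun v => Nat.b2n (b2 v)) ->
  computable O (fun v => Nat.b2n (if c v then b1 v else b2 v)).
Proof.
  intros Hc H1 H2; eapply computable_ext;
    [apply (computable_if c (fun v => Nat.b2n (b1 v)) (fun v => Nat.b2n (b2 v))); eauto|].
  intro v; cbv beta; destruct (c v); reflexivity.
Qed.
Lemma computable_ltb f g : computable O f -> computable O g ->
  computable O (fun v => Nat.b2n (f v <? g v)).
Proof.
  intros Hf Hg; eapply computable_ext.
  - apply (computable_sub (fun v => 1) (fun v => 1 - (g v - f v))); [apply computable_const|].
    apply computable_sub; [apply computable_const | apply computable_sub; auto].
  - intro v; destruct (f v <? g v) eqn:E; [apply Nat.ltb_lt in E | apply Nat.ltb_ge in E];
      cbn [Nat.b2n]; lia.
Qed.

Lemma computable_leb f g : computable O f -> computable O g ->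
  computable O (fun v => Nat.b2n (f v <=? g v)).
Proof.
  intros Hf Hg; change (computable O (fun v => Nat.b2n (f v <? S (g v)))).
  apply computable_ltb, computable_succ; auto.
Qed.

Lemma computable_even f : computable O f -> computable O (fun v => Nat.b2n (Nat.even (f v))).
Proof.
  intro Hf; eapply computable_ext.
  - apply (computable_rec (fun _ => 1) (fun w => 1 - nth 1 w 0) f []); auto.
    + apply computable_const.
    + apply computable_sub; [apply computable_const | apply computable_proj].
  - intro v; cbn [map]; induction (f v); [reflexivity|].
    cbn [primrec nth]; rewrite IHn, Nat.even_succ, <- Nat.negb_even.
    destruct (Nat.even n); reflexivity.
Qed.

Lemma div2_succ n : Nat.div2 (S n) = Nat.div2 n + (1 - Nat.b2n (Nat.even n)).
Proof.
  pose proof (Nat.div2_odd n) as Hn; pose proof (Nat.div2_odd (S n)) as HSn.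
  rewrite Nat.odd_succ in HSn; rewrite <- Nat.negb_even in Hn.
  destruct (Nat.even n); simpl in *; lia.
Qed.

Lemma computable_div2 f : computable O f -> computable O (fun v => Nat.div2 (f v)).
Proof.
  intro Hf; eapply computable_ext.
  - apply (computable_rec (fun _ => 0)
      (fun w => nth 1 w 0 + (1 - Nat.b2n (Nat.even (nth 0 w 0)))) f []); auto.
    + apply computable_zero.
    + apply computable_add; [apply computable_proj|].
      apply computable_sub; [apply computable_const|apply computable_even, computable_proj].
  - intro v; cbn [map]; induction (f v); [reflexivity|].
    cbn [primrec nth]; rewrite IHn, div2_succ; reflexivity.
Qed.

Lemma computable_pow b f : computable O f -> computable O (fun v => b ^ f v).
Proof.
  intro Hf; eapply computable_ext.
  - apply (computable_rec (fun _ => 1) (fun w => b * nth 1 w 0) f []); auto.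
    + apply computable_const.
    + apply computable_mul; [apply computable_const | apply computable_proj].
  - intro v; simpl; induction (f v); simpl; lia.
Qed.

End Computable.

Create HintDb computable.
#[export] Hint Resolve computable_proj computable_const computable_succ computable_member
  computable_add computable_pred computable_sub computable_mul computable_if computable_negb
  computable_andb computable_b2n_if computable_ltb computable_leb computable_even computable_div2
  computable_pow : computable.

Ltac solve_computable := solve [auto 100 with computable].

Definition tri (s : nat) : nat := nat_rec _ 0 (fun i m => S i + m) s.

Lemma tri_succ s : tri (S s) = S s + tri s.
Proof. reflexivity. Qed.

Lemma computable_tri O f : computable O f -> computable O (fun v => tri (f v)).
Proof.
  intro Hf; eapply computable_ext.
  - apply (computable_rec O (fun _ => 0) (fun w => S (nth 0 w 0) + nth 1 w 0) f []); auto;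
      solve_computable.
  - intro v; simpl; induction (f v); simpl; auto.
Qed.
#[export] Hint Resolve computable_tri : computable.

Lemma computable_to_nat O f g : computable O f -> computable O g ->
  computable O (fun v => to_nat (f v, g v)).
Proof. intros; change (computable O (fun v => g v + tri (g v + f v))); solve_computable. Qed.

Definition cantor_diag (n : nat) : nat := mu (fun w => S (nth 1 w 0) - tri (S (nth 0 w 0))) [n].

Lemma cantor_diag_spec n : tri (cantor_diag n) <= n < tri (S (cantor_diag n)).
Proof.
  destruct (mu_spec (fun w => S (nth 1 w 0) - tri (S (nth 0 w 0))) [n]) as [H0 Hlt].
  - exists n; cbn [nth]; rewrite tri_succ; lia.
  - fold (cantor_diag n) in H0, Hlt; cbn [nth] in H0, Hlt; split; [|lia].
    destruct (cantor_diag n) as [|k]; [cbn; lia|].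
    specialize (Hlt k (Nat.lt_succ_diag_r k)); cbn [nth] in Hlt; lia.
Qed.

Lemma of_nat_diag n :
  of_nat n = (cantor_diag n - (n - tri (cantor_diag n)), n - tri (cantor_diag n)).
Proof.
  apply to_nat_inj; rewrite cancel_to_of; change (to_nat (?x, ?y)) with (y + tri (y + x)).
  pose proof (cantor_diag_spec n) as [H1 H2]; rewrite tri_succ in H2.
  replace (n - tri (cantor_diag n) + (cantor_diag n - (n - tri (cantor_diag n))))
    with (cantor_diag n) by lia; lia.
Qed.

Lemma computable_cantor_diag O f : computable O f -> computable O (fun v => cantor_diag (f v)).
Proof.
  intro Hf; apply computable_mu_at; [solve_computable | | exact Hf].
  intro v; exists (nth 0 v 0); cbn [nth]; rewrite tri_succ; lia.
Qed.
#[export] Hint Resolve computable_to_nat computable_cantor_diag : computable.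

Lemma computable_fst_of_nat O f : computable O f -> computable O (fun v => fst (of_nat (f v))).
Proof.
  intro; apply computable_ext with
    (fun v => cantor_diag (f v) - (f v - tri (cantor_diag (f v)))); [solve_computable|].
  intro v; rewrite of_nat_diag; reflexivity.
Qed.

Lemma computable_snd_of_nat O f : computable O f -> computable O (fun v => snd (of_nat (f v))).
Proof.
  intro; apply computable_ext with (fun v => f v - tri (cantor_diag (f v))); [solve_computable|].
  intro v; rewrite of_nat_diag; reflexivity.
Qed.
#[export] Hint Resolve computable_fst_of_nat computable_snd_of_nat : computable.

(** * Turing reducibility *)

Lemma turing_le_of_decider A O (b : nat -> bool) :
  computable O (fun v => Nat.b2n (b (nth 0 v 0))) -> (forall n, A n <-> b n = true) ->
  turing_le A O.
Proof.
  intros [c Hc] Hb; exists c; intro n; specialize (Hc [n]); specialize (Hb n); simpl in Hc.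
  destruct (b n); split; intro h; auto.
  - exfalso; apply h, Hb; reflexivity.
  - apply Hb in h; discriminate.
Qed.

Lemma computable_member_le A O f : turing_le A O -> computable O f ->
  computable O (fun v => Nat.b2n (member A (f v))).
Proof.
  intros [e He] [c Hc]; exists (CComp e [c]); intro v.
  econstructor; [repeat constructor; apply Hc|].
  destruct (member A (f v)) eqn:E; apply He; [apply member_true | apply member_false]; auto.
Qed.
#[export] Hint Resolve computable_member_le : computable.

Lemma turing_le_refl A : turing_le A A.
Proof.
  apply (turing_le_of_decider A A (member A)); [solve_computable|].
  intro n; symmetry; apply member_true.
Qed.
#[export] Hint Resolve turing_le_refl : computable.

Fixpoint subst_oracle (e c : code) : code :=
  match c with
  | COrac => CComp e [CProj 0]
  | CComp f gs => CComp (subst_oracle e f) (map (subst_oracle e) gs)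
  | CPrec f g => CPrec (subst_oracle e f) (subst_oracle e g)
  | CMu f => CMu (subst_oracle e f)
  | c => c
  end.

Section SubstOracle.

Variables (B O : nat -> Prop) (e : code).
Hypothesis He : forall n, (B n -> eval O e [n] 1) /\ (~ B n -> eval O e [n] 0).

Let eval_proj0 x v : evals O [CProj 0] (x :: v) [x] :=
  evs_cons O _ _ _ _ _ (ev_proj O 0 (x :: v)) (evs_nil O _).

Fixpoint eval_subst_oracle c v y (H : eval B c v y) {struct H} :
  eval O (subst_oracle e c) v y :=
  match H in eval _ c v y return eval O (subst_oracle e c) v y with
  | ev_zero _ v => ev_zero O v
  | ev_succ _ x v => ev_succ O x v
  | ev_proj _ i v => ev_proj O i v
  | ev_orac_in _ x v h => ev_comp O e _ _ _ _ (eval_proj0 x v) (proj1 (He x) h)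
  | ev_orac_out _ x v h => ev_comp O e _ _ _ _ (eval_proj0 x v) (proj2 (He x) h)
  | ev_comp _ f gs v ws y Hs Hf =>
      ev_comp O _ _ v ws y (evals_subst_oracle gs v ws Hs) (eval_subst_oracle f ws y Hf)
  | ev_prec0 _ f g v y Hf => ev_prec0 O _ _ v y (eval_subst_oracle _ _ _ Hf)
  | ev_precS _ f g n v y z H1 H2 =>
      ev_precS O _ _ n v y z (eval_subst_oracle _ _ _ H1) (eval_subst_oracle _ _ _ H2)
  | ev_mu _ f v n H0 Hlt =>
      ev_mu O _ v n (eval_subst_oracle _ _ _ H0)
        (fun m hm => match Hlt m hm with
                     | ex_intro _ k hk => ex_intro _ k (eval_subst_oracle _ _ _ hk) end)
  end
with evals_subst_oracle gs v ws (H : evals B gs v ws) {struct H} :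
  evals O (map (subst_oracle e) gs) v ws :=
  match H in evals _ gs v ws return evals O (map (subst_oracle e) gs) v ws with
  | evs_nil _ v => evs_nil O v
  | evs_cons _ g gs v w ws Hg Hgs =>
      evs_cons O _ _ v w ws (eval_subst_oracle _ _ _ Hg) (evals_subst_oracle _ _ _ Hgs)
  end.

End SubstOracle.

Lemma turing_le_trans A B O : turing_le A B -> turing_le B O -> turing_le A O.
Proof.
  intros [c Hc] [e He]; exists (subst_oracle e c); intro n.
  split; intro h; apply (eval_subst_oracle B O e He); apply Hc; auto.
Qed.

Definition empty : nat -> Prop := fun _ => False.

Lemma turing_le_empty O : turing_le empty O.
Proof. apply (turing_le_of_decider empty O (fun _ => false)); [solve_computable | easy]. Qed.

Lemma member_tjoin A B n :
  member (tjoin A B) n = if Nat.even n then member A (Nat.div2 n) else member B (Nat.div2 n).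
Proof. unfold member, tjoin; destruct (Nat.even n); reflexivity. Qed.

Lemma member_tjoin_even A B i : member (tjoin A B) (2 * i) = member A i.
Proof. rewrite member_tjoin, Nat.even_even, Nat.div2_double; reflexivity. Qed.

Lemma member_tjoin_odd A B i : member (tjoin A B) (S (2 * i)) = member B i.
Proof.
  rewrite member_tjoin, Nat.even_succ, Nat.odd_even, Nat.div2_succ_double; reflexivity.
Qed.

Lemma turing_le_tjoin_l A B : turing_le A (tjoin A B).
Proof.
  apply (turing_le_of_decider A _ (fun n => member (tjoin A B) (2 * n))); [solve_computable|].
  intro n; rewrite member_tjoin_even; symmetry; apply member_true.
Qed.

Lemma turing_le_tjoin_r A B : turing_le B (tjoin A B).
Proof.
  apply (turing_le_of_decider B _ (fun n => member (tjoin A B) (S (2 * n)))); [solve_computable|].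
  intro n; rewrite member_tjoin_odd; symmetry; apply member_true.
Qed.

Lemma turing_le_tjoin A B O : turing_le A O -> turing_le B O -> turing_le (tjoin A B) O.
Proof.
  intros HA HB.
  apply (turing_le_of_decider _ O (fun n =>
    if Nat.even n then member A (Nat.div2 n) else member B (Nat.div2 n))); [solve_computable|].
  intro n; rewrite <- member_tjoin; symmetry; apply member_true.
Qed.

#[export] Hint Resolve turing_le_tjoin_l turing_le_tjoin_r : computable.

Lemma turing_le_of_witnesses A O (yes no : nat -> nat -> bool) :
  computable O (fun w => Nat.b2n (yes (nth 0 w 0) (nth 1 w 0))) ->
  computable O (fun w => Nat.b2n (no (nth 0 w 0) (nth 1 w 0))) ->
  (forall k n, yes k n = true -> A n) ->
  (forall k n, no k n = true -> ~ A n) ->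
  (forall n, exists k, yes k n = true \/ no k n = true) ->
  turing_le A O.
Proof.
  intros Hy Hn Hyes Hno Hex.
  set (F w := Nat.b2n (negb (yes (nth 0 w 0) (nth 1 w 0)) && negb (no (nth 0 w 0) (nth 1 w 0)))).
  assert (HF : computable O F) by (unfold F; solve_computable).
  assert (Hterm : forall v, exists k, F (k :: v) = 0).
  { intro v; destruct (Hex (nth 0 v 0)) as [k [Hk|Hk]]; exists k; unfold F; simpl nth;
      rewrite Hk; [|destruct yes]; reflexivity. }
  apply (turing_le_of_decider A O (fun n => yes (mu F [n]) n)).
  - apply (computable_compose2 O (fun w => Nat.b2n (yes (nth 0 w 0) (nth 1 w 0))));
      [exact Hy | | solve_computable].
    apply computable_mu_at; auto; solve_computable.
  - intro n; destruct (mu_spec F [n] (Hterm [n])) as [H0 _].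
    set (k := mu F [n]) in *; destruct (yes k n) eqn:Ey; [split; eauto|].
    unfold F in H0; cbn [nth] in H0; rewrite Ey in H0.
    destruct (no k n) eqn:En; [|discriminate].
    split; [intro h; contradict h; eauto | discriminate].
Qed.

(** * Codes of rationals *)

Definition zig_pos (a : nat) : nat := if Nat.even a then Nat.div2 a else 0.
Definition zig_neg (a : nat) : nat := if Nat.even a then 0 else S (Nat.div2 a).
Definition unzig (p m : nat) : nat := if m <=? p then 2 * (p - m) else 2 * (m - p) - 1.

Definition qpos (n : nat) : nat := zig_pos (fst (of_nat n)).
Definition qneg (n : nat) : nat := zig_neg (fst (of_nat n)).
Definition qden (n : nat) : nat := snd (of_nat n).
Definition qcode (p m d : nat) : nat := to_nat (unzig p m, d).

Definition qltb (i j : nat) : bool :=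
  qpos i * S (qden j) + qneg j * S (qden i) <? qpos j * S (qden i) + qneg i * S (qden j).
Definition qopp (n : nat) : nat := qcode (qneg n) (qpos n) (qden n).
Definition qsub (n i : nat) : nat :=
  qcode (qpos n * S (qden i) + qneg i * S (qden n)) (qpos i * S (qden n) + qneg n * S (qden i))
        (S (qden n) * S (qden i) - 1).
Definition qinv (n : nat) : nat := qcode (S (qden n)) 0 (qpos n - qneg n - 1).
Definition qfrac (a b : nat) : nat := qcode a 0 (b - 1).
Definition qzero : nat := qcode 0 0 0.

Lemma computable_qpos O f : computable O f -> computable O (fun v => qpos (f v)).
Proof. unfold qpos, zig_pos; solve_computable. Qed.
Lemma computable_qneg O f : computable O f -> computable O (fun v => qneg (f v)).
Proof. unfold qneg, zig_neg; solve_computable. Qed.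
Lemma computable_qden O f : computable O f -> computable O (fun v => qden (f v)).
Proof. unfold qden; solve_computable. Qed.
Lemma computable_qcode O f g h : computable O f -> computable O g -> computable O h ->
  computable O (fun v => qcode (f v) (g v) (h v)).
Proof. unfold qcode, unzig; solve_computable. Qed.
#[export] Hint Resolve computable_qpos computable_qneg computable_qden computable_qcode
  : computable.

Lemma computable_qltb O f g : computable O f -> computable O g ->
  computable O (fun v => Nat.b2n (qltb (f v) (g v))).
Proof. unfold qltb; solve_computable. Qed.
Lemma computable_qopp O f : computable O f -> computable O (fun v => qopp (f v)).
Proof. unfold qopp; solve_computable. Qed.
Lemma computable_qsub O f g : computable O f -> computable O g ->
  computable O (fun v => qsub (f v) (g v)).
Proof. unfold qsub; solve_computable. Qed.
Lemma computable_qinv O f : computable O f -> computable O (fun v => qinv (f v)).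
Proof. unfold qinv; solve_computable. Qed.
Lemma computable_qfrac O f g : computable O f -> computable O g ->
  computable O (fun v => qfrac (f v) (g v)).
Proof. unfold qfrac; solve_computable. Qed.
#[export] Hint Resolve computable_qltb computable_qopp computable_qsub computable_qinv
  computable_qfrac : computable.

Local Open Scope R_scope.

Lemma Rdiv_lt_iff a b c d : 0 < b -> 0 < d -> (a / b < c / d <-> a * d < c * b).
Proof.
  intros Hb Hd; assert (Hbd : 0 < b * d) by nra.
  replace (a * d) with (a / b * (b * d)) by (field; lra).
  replace (c * b) with (c / d * (b * d)) by (field; lra).
  split; intro H; [apply Rmult_lt_compat_r | apply Rmult_lt_reg_r with (b * d)]; auto.
Qed.

Lemma Rdiv_le_iff a b c d : 0 < b -> 0 < d -> (a / b <= c / d <-> a * d <= c * b).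
Proof.
  intros Hb Hd; assert (Hbd : 0 < b * d) by nra.
  replace (a * d) with (a / b * (b * d)) by (field; lra).
  replace (c * b) with (c / d * (b * d)) by (field; lra).
  split; intro H; [apply Rmult_le_compat_r | apply Rmult_le_reg_r with (b * d)]; auto; lra.
Qed.

Lemma Rlt_inv_iff q x : 0 < q -> 0 < x -> (q < / x <-> x < / q).
Proof.
  intros Hq Hx.
  assert (E1 : x * / x = 1) by (field; lra); assert (E2 : q * / q = 1) by (field; lra).
  pose proof (Rinv_0_lt_compat x Hx); pose proof (Rinv_0_lt_compat q Hq).
  split; intro; nra.
Qed.

Lemma INR_succ_pos d : 0 < INR (S d).
Proof. apply lt_0_INR; lia. Qed.

Lemma IZR_zig a : IZR (zig a) = INR (zig_pos a) - INR (zig_neg a).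
Proof.
  unfold zig, zig_pos, zig_neg; destruct (Nat.even a); rewrite ?opp_IZR, <- INR_IZR_INZ; simpl; lra.
Qed.

Lemma rat_of_nat_parts n : rat_of_nat n = (INR (qpos n) - INR (qneg n)) / INR (S (qden n)).
Proof.
  unfold rat_of_nat, qpos, qneg, qden; destruct (of_nat n) as [a b]; rewrite IZR_zig; reflexivity.
Qed.

Lemma zig_unzig p m : INR (zig_pos (unzig p m)) - INR (zig_neg (unzig p m)) = INR p - INR m.
Proof.
  unfold unzig; destruct (Nat.leb_spec m p).
  - unfold zig_pos, zig_neg; rewrite Nat.even_even, Nat.div2_double, minus_INR by lia; simpl; lra.
  - replace (2 * (m - p) - 1)%nat with (S (2 * (m - p - 1))) by lia.
    unfold zig_pos, zig_neg; rewrite Nat.even_succ, Nat.odd_even, Nat.div2_succ_double.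
    replace (S (m - p - 1)) with (m - p)%nat by lia; rewrite minus_INR by lia; simpl; lra.
Qed.

Lemma rat_of_qcode p m d : rat_of_nat (qcode p m d) = (INR p - INR m) / INR (S d).
Proof. unfold rat_of_nat, qcode; rewrite cancel_of_to, IZR_zig, zig_unzig; reflexivity. Qed.

Lemma rat_of_qfrac a b : (0 < b)%nat -> rat_of_nat (qfrac a b) = INR a / INR b.
Proof.
  intro Hb; unfold qfrac; rewrite rat_of_qcode; replace (S (b - 1)) with b by lia; simpl; lra.
Qed.

Lemma rat_of_qzero : rat_of_nat qzero = 0.
Proof. unfold qzero; rewrite rat_of_qcode; simpl; lra. Qed.

Lemma qltb_spec i j : qltb i j = true <-> rat_of_nat i < rat_of_nat j.
Proof.
  rewrite !rat_of_nat_parts, Rdiv_lt_iff by apply INR_succ_pos.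
  unfold qltb; rewrite Nat.ltb_lt; split; intro H.
  - apply lt_INR in H; rewrite !plus_INR, !mult_INR in H; lra.
  - apply INR_lt; rewrite !plus_INR, !mult_INR; lra.
Qed.

Lemma rat_of_qopp n : rat_of_nat (qopp n) = - rat_of_nat n.
Proof.
  unfold qopp; rewrite rat_of_qcode, rat_of_nat_parts.
  pose proof (INR_succ_pos (qden n)); field; lra.
Qed.

Lemma rat_of_qsub n i : rat_of_nat (qsub n i) = rat_of_nat n - rat_of_nat i.
Proof.
  unfold qsub; rewrite rat_of_qcode, !rat_of_nat_parts.
  replace (S (S (qden n) * S (qden i) - 1)) with (S (qden n) * S (qden i))%nat by lia.
  rewrite !plus_INR, !mult_INR.
  pose proof (INR_succ_pos (qden n)); pose proof (INR_succ_pos (qden i)); field; lra.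
Qed.

Lemma rat_pos_iff n : 0 < rat_of_nat n <-> (qneg n < qpos n)%nat.
Proof.
  rewrite rat_of_nat_parts; pose proof (INR_succ_pos (qden n)) as Hd.
  set (a := INR (qpos n) - INR (qneg n)).
  assert (E : a = a / INR (S (qden n)) * INR (S (qden n))) by (field; lra).
  split; intro H.
  - assert (0 < a) by nra; apply INR_lt; unfold a in *; lra.
  - apply Rdiv_lt_0_compat; [apply lt_INR in H; unfold a; lra | auto].
Qed.

Lemma rat_of_qinv n : 0 < rat_of_nat n -> rat_of_nat (qinv n) = / rat_of_nat n.
Proof.
  intro Hpos; pose proof Hpos as H; apply rat_pos_iff in H.
  unfold qinv; rewrite rat_of_qcode, rat_of_nat_parts.
  replace (S (qpos n - qneg n - 1)) with (qpos n - qneg n)%nat by lia.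
  rewrite minus_INR by lia.
  assert (INR (qneg n) < INR (qpos n)) by (apply lt_INR; lia).
  pose proof (INR_succ_pos (qden n)); change (INR 0) with 0; field; lra.
Qed.

Lemma INR_Z_to_nat_sub z : INR (Z.to_nat z) - INR (Z.to_nat (- z)) = IZR z.
Proof.
  destruct (Z_le_gt_dec 0 z).
  - replace (Z.to_nat (- z)) with 0%nat by lia; rewrite INR_IZR_INZ, Z2Nat.id by lia; simpl; lra.
  - replace (Z.to_nat z) with 0%nat by lia.
    rewrite (INR_IZR_INZ (Z.to_nat (- z))), Z2Nat.id, opp_IZR by lia; simpl; lra.
Qed.

Lemma rat_dense a b : a < b -> exists n, a < rat_of_nat n < b.
Proof.
  intro Hab; destruct (INR_archimed (b - a) 1) as [d Hd]; [lra|].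
  assert (Hd' : INR (S d) * (b - a) > 1) by (rewrite S_INR; lra).
  pose proof (INR_succ_pos d) as Hpos.
  set (k := up (a * INR (S d))); destruct (archimed (a * INR (S d))) as [K1 K2]; fold k in K1, K2.
  exists (qcode (Z.to_nat k) (Z.to_nat (- k)) d).
  rewrite rat_of_qcode, INR_Z_to_nat_sub.
  replace a with (a * INR (S d) / INR (S d)) by (field; lra).
  replace b with (b * INR (S d) / INR (S d)) by (field; lra).
  rewrite !Rdiv_lt_iff by lra; split; nra.
Qed.

Definition rational (x : R) : Prop := exists n, rat_of_nat n = x.

Lemma rat_of_nat_neq_irrational z n : ~ rational z -> rat_of_nat n <> z.
Proof. intros Hirr E; apply Hirr; exists n; exact E. Qed.

(** * Reductions between cuts *)

Local Open Scope bool_scope.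

Lemma turing_le_cut_rat n0 O : turing_le (cut (rat_of_nat n0)) O.
Proof.
  apply (turing_le_of_decider _ O (fun n => qltb n n0)); [solve_computable|].
  intro n; symmetry; apply qltb_spec.
Qed.

Lemma turing_le_cut_opp x : ~ rational (- x) -> turing_le (cut (- x)) (cut x).
Proof.
  intro Hirr.
  apply (turing_le_of_decider _ _ (fun n => negb (member (cut x) (qopp n)))); [solve_computable|].
  intro n; rewrite Bool.negb_true_iff, member_false; unfold cut; rewrite rat_of_qopp.
  pose proof (rat_of_nat_neq_irrational _ n Hirr).
  split; intro; lra.
Qed.

Lemma turing_le_cut_inv x : (0 < x) -> ~ rational (/ x) -> turing_le (cut (/ x)) (cut x).
Proof.
  intros Hx Hirr.
  apply (turing_le_of_decider _ _ (fun n =>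
    if qltb qzero n then negb (member (cut x) (qinv n)) else true)); [solve_computable|].
  intro n; unfold cut; pose proof (Rinv_0_lt_compat x Hx).
  destruct (Rlt_or_le 0 (rat_of_nat n)) as [Hpos|Hnpos].
  - replace (qltb qzero n) with true by (symmetry; apply qltb_spec; rewrite rat_of_qzero; auto).
    rewrite Bool.negb_true_iff, member_false, rat_of_qinv, Rlt_inv_iff by auto.
    pose proof (rat_of_nat_neq_irrational _ n Hirr).
    assert (x <> / rat_of_nat n) by (intro E; subst; rewrite Rinv_inv in *; auto).
    split; intro; lra.
  - replace (qltb qzero n) with false
      by (symmetry; apply Bool.not_true_iff_false; rewrite qltb_spec, rat_of_qzero; lra).
    split; auto; intros _; lra.
Qed.

Lemma turing_le_cut_add x y : ~ rational (x + y) -> turing_le (cut (x + y)) (tjoin (cut x) (cut y)).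
Proof.
  intro Hirr.
  apply (turing_le_of_witnesses _ _
    (fun k n => member (cut x) k && member (cut y) (qsub n k))
    (fun k n => negb (member (cut x) k) && negb (member (cut y) (qsub n k))));
    [solve_computable | solve_computable | | |].
  - intros k n H; apply andb_prop in H as [Hk Hn]; apply member_true in Hk, Hn.
    unfold cut in *; rewrite rat_of_qsub in Hn; lra.
  - intros k n H; apply andb_prop in H as [Hk Hn].
    apply Bool.negb_true_iff, member_false in Hk, Hn.
    unfold cut in *; rewrite rat_of_qsub in Hn; lra.
  - intro n; pose proof (rat_of_nat_neq_irrational _ n Hirr).
    destruct (Rlt_or_le (rat_of_nat n) (x + y)).
    + destruct (rat_dense (rat_of_nat n - y) x) as [k Hk]; [lra|]; exists k; left.
      apply andb_true_intro; split; apply member_true; unfold cut; rewrite ?rat_of_qsub; lra.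
    + destruct (rat_dense x (rat_of_nat n - y)) as [k Hk]; [lra|]; exists k; right.
      apply andb_true_intro; split; apply Bool.negb_true_iff, member_false; unfold cut;
        rewrite ?rat_of_qsub; lra.
Qed.

(** * Ideals give subfields *)

Section IdealReals.

Variable S : (nat -> Prop) -> Prop.
Hypothesis HS : degree_ideal S.

Lemma reals_of_reducible z A : S A -> (~ rational z -> turing_le (cut z) A) -> reals_of S z.
Proof.
  intros HA Hred; destruct HS as [_ [_ Hdown]].
  destruct (classic (rational z)) as [[n <-]|Hirr].
  - apply (Hdown _ A HA), turing_le_cut_rat.
  - apply (Hdown _ A HA), Hred, Hirr.
Qed.

Lemma reals_of_rat n : reals_of S (rat_of_nat n).
Proof.
  destruct HS as [[A HA] _]; apply (reals_of_reducible _ A HA).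
  intro Hirr; contradict Hirr; exists n; reflexivity.
Qed.

Lemma reals_of_0 : reals_of S 0.
Proof. rewrite <- rat_of_qzero; apply reals_of_rat. Qed.

Lemma reals_of_1 : reals_of S 1.
Proof.
  replace 1 with (rat_of_nat (qcode 1 0 0)) by (rewrite rat_of_qcode; simpl; lra).
  apply reals_of_rat.
Qed.

Lemma reals_of_add x y : reals_of S x -> reals_of S y -> reals_of S (x + y).
Proof.
  intros Hx Hy; destruct HS as [_ [Hjoin _]].
  apply (reals_of_reducible _ _ (Hjoin _ _ Hx Hy)), turing_le_cut_add.
Qed.

Lemma reals_of_opp x : reals_of S x -> reals_of S (- x).
Proof. intro Hx; apply (reals_of_reducible _ _ Hx), turing_le_cut_opp. Qed.

Lemma reals_of_inv x : x <> 0 -> reals_of S x -> reals_of S (/ x).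
Proof.
  assert (Hpos : forall x, 0 < x -> reals_of S x -> reals_of S (/ x)).
  { intros z Hz Hzs; apply (reals_of_reducible _ _ Hzs), turing_le_cut_inv, Hz. }
  intros Hx0 Hx; destruct (Rlt_or_le 0 x); [auto|].
  replace (/ x) with (- / - x) by (field; auto).
  apply reals_of_opp, Hpos, reals_of_opp, Hx; lra.
Qed.

Lemma reals_of_sq z : reals_of S z -> reals_of S (z * z).
Proof.
  intro Hz.
  destruct (Req_dec z 0) as [->|Hz0]; [rewrite Rmult_0_l; apply reals_of_0|].
  destruct (Req_dec z (-1)) as [->|Hz1]; [replace (-1 * -1) with 1 by ring; apply reals_of_1|].
  assert (Hz1' : z + 1 <> 0) by lra.
  assert (E : / z + - / (z + 1) = / (z * (z + 1))) by (field; auto).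
  replace (z * z) with (/ (/ z + - / (z + 1)) + - z) by (rewrite E, Rinv_inv; ring).
  apply reals_of_add, reals_of_opp, Hz.
  apply reals_of_inv; [rewrite E; apply Rinv_neq_0_compat, Rmult_integral_contrapositive; auto|].
  apply reals_of_add; [apply reals_of_inv, Hz; auto|].
  apply reals_of_opp, reals_of_inv, reals_of_add, reals_of_1; auto.
Qed.

Lemma reals_of_div4 w : reals_of S w -> reals_of S (w / 4).
Proof.
  intro Hw; destruct (Req_dec w 0) as [->|Hw0].
  { replace (0 / 4) with 0 by field; apply reals_of_0. }
  assert (Hinv : reals_of S (/ w)) by (apply reals_of_inv; auto).
  replace (w / 4) with (/ (/ w + / w + / w + / w)) by (field; auto).
  apply reals_of_inv; [|repeat apply reals_of_add; auto].
  replace (/ w + / w + / w + / w) with (4 * / w) by ring.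
  apply Rmult_integral_contrapositive; split; [lra | apply Rinv_neq_0_compat; auto].
Qed.

Lemma reals_of_mul x y : reals_of S x -> reals_of S y -> reals_of S (x * y).
Proof.
  intros Hx Hy.
  replace (x * y) with (((x + y) * (x + y) + - ((x + - y) * (x + - y))) / 4) by field.
  apply reals_of_div4, reals_of_add; [|apply reals_of_opp];
    apply reals_of_sq, reals_of_add; auto; apply reals_of_opp; auto.
Qed.

End IdealReals.

Lemma ideal_subfield S : degree_ideal S -> is_subfield (reals_of S).
Proof.
  intro HS; repeat split.
  - apply reals_of_0; auto.
  - apply reals_of_1; auto.
  - apply reals_of_add; auto.
  - apply reals_of_opp; auto.
  - apply reals_of_mul; auto.
  - intros x Hx Hx0; apply reals_of_inv; auto.
Qed.

Local Open Scope nat_scope.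

(** * Coding a set by a real *)

Fixpoint base4_prefix (D : nat -> Prop) (k : nat) : nat :=
  match k with 0 => 0 | S k => 4 * base4_prefix D k + Nat.b2n (member D k) end.

Lemma base4_prefix_lower D m k : 4 ^ k * base4_prefix D m <= base4_prefix D (k + m).
Proof. induction k; simpl; [lia|]; pose proof (Nat.b2n_le_1 (member D (k + m))); nia. Qed.

Lemma base4_prefix_upper D m k :
  3 * base4_prefix D (k + m) + 1 <= 4 ^ k * (3 * base4_prefix D m + 1).
Proof. induction k; simpl; [lia|]; pose proof (Nat.b2n_le_1 (member D (k + m))); nia. Qed.

Lemma base4_prefix_cross D k m :
  base4_prefix D k * (3 * 4 ^ m) <= (3 * base4_prefix D m + 1) * 4 ^ k.
Proof.
  destruct (le_lt_dec m k) as [h|h].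
  - replace k with ((k - m) + m) by lia; rewrite Nat.pow_add_r.
    pose proof (base4_prefix_upper D m (k - m)); nia.
  - replace m with ((m - k) + k) by lia; rewrite Nat.pow_add_r.
    pose proof (base4_prefix_lower D k (m - k)); nia.
Qed.

Lemma computable_base4_prefix D O f : turing_le D O -> computable O f ->
  computable O (fun v => base4_prefix D (f v)).
Proof.
  intros HD Hf; eapply computable_ext.
  - apply (computable_rec O (fun _ => 0)
      (fun w => 4 * nth 1 w 0 + Nat.b2n (member D (nth 0 w 0))) f []); auto; solve_computable.
  - intro v; cbn [map]; induction (f v); [reflexivity|].
    cbn [primrec nth]; rewrite IHn; reflexivity.
Qed.
#[export] Hint Resolve computable_base4_prefix : computable.

Local Open Scope R_scope.

Lemma INR_pow4_pos k : 0 < INR (4 ^ k).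
Proof. apply lt_0_INR, Nat.neq_0_lt_0, Nat.pow_nonzero; lia. Qed.

Definition base4_lower D k : R := INR (base4_prefix D k) / INR (4 ^ k).
Definition base4_upper D k : R := (3 * INR (base4_prefix D k) + 1) / (3 * INR (4 ^ k)).

Lemma inv_pow4_pos k : 0 < / INR (4 ^ k).
Proof. apply Rinv_0_lt_compat, INR_pow4_pos. Qed.

Lemma base4_upper_eq D k : base4_upper D k = base4_lower D k + / INR (4 ^ k) / 3.
Proof. unfold base4_upper, base4_lower; pose proof (INR_pow4_pos k); field; lra. Qed.

Lemma base4_lower_le_upper D k m : base4_lower D k <= base4_upper D m.
Proof.
  unfold base4_lower, base4_upper; pose proof (INR_pow4_pos k); pose proof (INR_pow4_pos m).
  apply Rdiv_le_iff; [lra | lra |].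
  pose proof (le_INR _ _ (base4_prefix_cross D k m)) as Hcross.
  repeat rewrite ?mult_INR, ?plus_INR in Hcross.
  replace (INR 3) with 3 in Hcross by (simpl; lra); change (INR 1) with 1 in Hcross; lra.
Qed.

Lemma base4_lowers_bound D : bound (fun r => exists k, r = base4_lower D k).
Proof. exists (base4_upper D 0); intros r [k ->]; apply base4_lower_le_upper. Qed.

Lemma base4_lowers_inhabited D : exists r, exists k, r = base4_lower D k.
Proof. exists (base4_lower D 0), 0%nat; reflexivity. Qed.

Definition base4_real (D : nat -> Prop) : R :=
  proj1_sig (completeness _ (base4_lowers_bound D) (base4_lowers_inhabited D)).

Lemma base4_lower_le_real D k : base4_lower D k <= base4_real D.
Proof.
  unfold base4_real; destruct completeness as [v [Hub Hlub]]; simpl.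
  apply Hub; exists k; reflexivity.
Qed.

Lemma base4_real_le_upper D k : base4_real D <= base4_upper D k.
Proof.
  unfold base4_real; destruct completeness as [v [Hub Hlub]]; simpl; apply Hlub.
  intros r [j ->]; apply base4_lower_le_upper.
Qed.

Lemma base4_real_bounds D k :
  base4_lower D k <= base4_real D <= base4_lower D k + / INR (4 ^ k) / 3.
Proof.
  rewrite <- base4_upper_eq; split; [apply base4_lower_le_real | apply base4_real_le_upper].
Qed.

Lemma inv_pow4_small eps : 0 < eps -> exists k, / INR (4 ^ k) < eps.
Proof.
  intro He; destruct (INR_archimed eps 1) as [k Hk]; [lra|]; exists k.
  assert (Hlt : INR k < INR (4 ^ k)) by (apply lt_INR, Nat.pow_gt_lin_r; lia).
  pose proof (INR_pow4_pos k).
  apply (Rmult_lt_reg_r (INR (4 ^ k))); [lra|]; rewrite Rinv_l by lra; nra.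
Qed.

Lemma base4_real_unique D w :
  (forall k, base4_lower D k <= w <= base4_lower D k + / INR (4 ^ k)) -> w = base4_real D.
Proof.
  intro Hw; destruct (Req_dec w (base4_real D)) as [|Hne]; auto; exfalso.
  destruct (inv_pow4_small (Rabs (w - base4_real D))) as [k Hk]; [apply Rabs_pos_lt; lra|].
  specialize (Hw k); pose proof (base4_real_bounds D k); pose proof (inv_pow4_pos k).
  unfold Rabs in Hk; destruct Rcase_abs in Hk; lra.
Qed.

Lemma member_tjoin_split A B k :
  Nat.b2n (member (tjoin A B) k) =
  (Nat.b2n (member (tjoin A empty) k) + Nat.b2n (member (tjoin empty B) k))%nat.
Proof.
  assert (E : forall i, member empty i = false) by (intro; apply member_false; auto).
  rewrite !member_tjoin.
  destruct (Nat.even k); rewrite E; simpl; lia.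
Qed.

Lemma base4_prefix_tjoin A B k :
  base4_prefix (tjoin A B) k =
  (base4_prefix (tjoin A empty) k + base4_prefix (tjoin empty B) k)%nat.
Proof. induction k; simpl; auto; rewrite IHk, member_tjoin_split; lia. Qed.

(* The digits of [tjoin A empty] and [tjoin empty B] sit at even and odd positions, so
   their sum has no carries. *)
Lemma base4_real_tjoin A B :
  base4_real (tjoin A empty) + base4_real (tjoin empty B) = base4_real (tjoin A B).
Proof.
  apply base4_real_unique; intro k.
  assert (Hsum : base4_lower (tjoin A B) k =
                 base4_lower (tjoin A empty) k + base4_lower (tjoin empty B) k).
  { unfold base4_lower; rewrite base4_prefix_tjoin, plus_INR.
    pose proof (INR_pow4_pos k); field; lra. }
  pose proof (base4_real_bounds (tjoin A empty) k).
  pose proof (base4_real_bounds (tjoin empty B) k).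
  pose proof (inv_pow4_pos k); lra.
Qed.

Definition digit_search (x : R) (w : list nat) : nat :=
  Nat.b2n (member (cut x) (qfrac (2 * nth 0 w 0 + 1) (2 * 4 ^ S (nth 1 w 0)))%nat).

(* [base4_real D] lies in the first third of the interval [[N/4^k, (N+1)/4^k]], with
   [N = base4_prefix D k], so it is separated from the midpoint [(2N+1)/(2*4^k)]. *)
Lemma digit_search_least D v :
  least_zero (digit_search (base4_real D)) v (base4_prefix D (S (nth 0 v 0%nat))).
Proof.
  set (k := S (nth 0 v 0%nat)); set (N := base4_prefix D k).
  assert (HQ : (0 < 2 * 4 ^ k)%nat) by (pose proof (Nat.pow_nonzero 4 k); lia).
  pose proof (INR_pow4_pos k) as HQ'; assert (I2 : INR 2 = 2) by (simpl; lra).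
  pose proof (base4_lower_le_real D k) as Hlo; pose proof (base4_real_le_upper D k) as Hhi.
  unfold base4_lower, base4_upper in Hlo, Hhi; fold N in Hlo, Hhi.
  unfold digit_search; split; [|intros m Hm]; cbn [nth]; fold k.
  - rewrite (member_eq _ _ false); [reflexivity|]; unfold cut; rewrite rat_of_qfrac by auto.
    split; [|discriminate]; intro Hlt; exfalso; apply (Rlt_not_le _ _ Hlt).
    eapply Rle_trans; [exact Hhi|].
    repeat rewrite ?mult_INR, ?plus_INR; rewrite I2; change (INR 1) with 1.
    apply Rdiv_le_iff; nra.
  - rewrite (member_eq _ _ true); [discriminate|]; unfold cut; rewrite rat_of_qfrac by auto.
    split; [reflexivity|]; intros _; eapply Rlt_le_trans; [|exact Hlo].
    assert (Hm' : (2 * m + 1 < 2 * N)%nat) by lia; apply lt_INR in Hm'.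
    repeat rewrite ?mult_INR, ?plus_INR in *; rewrite I2 in *; change (INR 1) with 1 in *.
    apply Rdiv_lt_iff; nra.
Qed.

Lemma turing_le_base4_cut D : turing_le D (cut (base4_real D)).
Proof.
  set (F := digit_search (base4_real D)).
  assert (HF : computable (cut (base4_real D)) F) by (unfold F, digit_search; solve_computable).
  assert (Hterm : forall v, exists m, F (m :: v) = 0%nat)
    by (intro v; eexists; apply (digit_search_least D v)).
  apply (turing_le_of_decider _ _ (fun n => negb (Nat.even (mu F [n])))).
  - apply computable_negb, computable_even, computable_mu_at; auto; solve_computable.
  - intro n; rewrite (mu_eq F [n] _ (digit_search_least D [n])); cbn [nth base4_prefix].
    rewrite Nat.even_add, Nat.even_mul.
    destruct (member D n) eqn:E; [apply member_true in E | apply member_false in E];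
      simpl; split; easy.
Qed.

Definition base4_lower_code D k : nat := qfrac (base4_prefix D k) (4 ^ k).
Definition base4_upper_code D k : nat := qfrac (3 * base4_prefix D k + 1) (3 * 4 ^ k).

Lemma rat_of_base4_lower_code D k : rat_of_nat (base4_lower_code D k) = base4_lower D k.
Proof. apply rat_of_qfrac; pose proof (Nat.pow_nonzero 4 k); lia. Qed.

Lemma rat_of_base4_upper_code D k : rat_of_nat (base4_upper_code D k) = base4_upper D k.
Proof.
  unfold base4_upper_code, base4_upper.
  rewrite rat_of_qfrac by (pose proof (Nat.pow_nonzero 4 k); lia).
  repeat rewrite ?mult_INR, ?plus_INR; replace (INR 3) with 3 by (simpl; lra); reflexivity.
Qed.

Lemma turing_le_cut_base4 D : turing_le (cut (base4_real D)) D.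
Proof.
  destruct (classic (rational (base4_real D))) as [[n <-]|Hirr]; [apply turing_le_cut_rat|].
  apply (turing_le_of_witnesses _ D (fun k n => qltb n (base4_lower_code D k))
    (fun k n => negb (qltb n (base4_upper_code D k))));
    [unfold base4_lower_code, base4_upper_code; solve_computable ..| | |]; unfold cut.
  - intros k n Hk; apply qltb_spec in Hk; rewrite rat_of_base4_lower_code in Hk.
    pose proof (base4_lower_le_real D k); lra.
  - intros k n Hk; apply Bool.negb_true_iff, Bool.not_true_iff_false in Hk.
    rewrite qltb_spec, rat_of_base4_upper_code in Hk.
    pose proof (base4_real_le_upper D k); lra.
  - intro n; pose proof (rat_of_nat_neq_irrational _ n Hirr).
    destruct (inv_pow4_small (Rabs (base4_real D - rat_of_nat n))) as [k Hk];
      [apply Rabs_pos_lt; lra|]; exists k.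
    pose proof (base4_real_bounds D k); pose proof (inv_pow4_pos k).
    rewrite Bool.negb_true_iff, <- Bool.not_true_iff_false, !qltb_spec,
      rat_of_base4_lower_code, rat_of_base4_upper_code, base4_upper_eq.
    unfold Rabs in Hk; destruct Rcase_abs in Hk; [right | left]; lra.
Qed.

Lemma turing_equiv_base4 D : turing_equiv D (cut (base4_real D)).
Proof. split; [apply turing_le_base4_cut | apply turing_le_cut_base4]. Qed.

(** * Subfields give ideals *)

Lemma turing_equiv_sym A B : turing_equiv A B -> turing_equiv B A.
Proof. intros [H1 H2]; split; auto. Qed.

Lemma turing_equiv_trans A B C : turing_equiv A B -> turing_equiv B C -> turing_equiv A C.
Proof. intros [H1 H2] [H3 H4]; split; eapply turing_le_trans; eauto. Qed.

Lemma turing_equiv_tjoin_l A B : turing_le B A -> turing_equiv (tjoin A B) A.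
Proof.
  intro HBA; split; [apply turing_le_tjoin; auto; apply turing_le_refl | apply turing_le_tjoin_l].
Qed.

Lemma turing_equiv_tjoin_empty A : turing_equiv (tjoin empty A) A.
Proof.
  split; [apply turing_le_tjoin; [apply turing_le_empty | apply turing_le_refl]|].
  apply turing_le_tjoin_r.
Qed.

Lemma degree_set_base4_real S D A : degree_set S -> turing_equiv D A ->
  (S (cut (base4_real D)) <-> S A).
Proof.
  intros HS HDA; split; apply HS.
  - apply (turing_equiv_trans _ D); [apply turing_equiv_sym, turing_equiv_base4 | exact HDA].
  - apply (turing_equiv_trans _ D); [apply turing_equiv_sym, HDA | apply turing_equiv_base4].
Qed.

Lemma subfield_ideal S : degree_set S -> is_subfield (reals_of S) -> degree_ideal S.
Proof.
  intros HS [H0 [_ [Hadd [Hopp _]]]]; unfold reals_of in *.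
  split; [exists (cut 0); exact H0|split].
  - intros A B HA HB.
    apply (degree_set_base4_real S (tjoin A B)); [auto | split; apply turing_le_refl|].
    rewrite <- base4_real_tjoin; apply Hadd.
    + apply (degree_set_base4_real S _ A HS); [|exact HA].
      apply turing_equiv_tjoin_l, turing_le_empty.
    + apply (degree_set_base4_real S _ B HS); [apply turing_equiv_tjoin_empty | exact HB].
  - intros A B HB HAB.
    apply (degree_set_base4_real S _ A HS (turing_equiv_tjoin_empty A)).
    replace (base4_real (tjoin empty A))
      with (base4_real (tjoin B A) + - base4_real (tjoin B empty))
      by (rewrite <- (base4_real_tjoin B A); ring).
    apply Hadd; [|apply Hopp]; apply (degree_set_base4_real S _ B HS); auto;
      apply turing_equiv_tjoin_l; [exact HAB | apply turing_le_empty].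
Qed.

Theorem mainTheorem4 (S : (nat -> Prop) -> Prop) (HS : degree_set S) :
  is_subfield (reals_of S) <-> degree_ideal S.
Proof. split; [apply subfield_ideal, HS | apply ideal_subfield]. Qed.
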